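(* Let $G$ be a connected graph. Then $\mathrm{lpt}(G)\le \max |C^*|$, where the maximum is taken over all bonds $C^*$ of $G$.
   Context: All graphs are finite, simple and undirected. $\mathrm{lpt}(G)$ denotes the minimum size of a set of vertices of $G$ that intersects (shares a vertex with) every longest path of $G$. A bond of $G$ is a minimal nonempty edge-cut, where an edge-cut is a set of edges of the form $\{xy\in E(G): x\in X, y\in V(G)\setminus X\}$ for some $X\subseteq V(G)$; $|C^*|$ is the number of edges of the bond $C^*$. *)

(* Simple graphs: symmetric irreflexive relation e on a finType T. *)
From mathcomp Require Import all_boot.
From Stdlib Require Import ClassicalEpsilon.
Set Implicit Arguments. Unset Strict Implicit. Unset Printing Implicit Defensive.

Section Graphs.
Variables (T : finType) (e : rel T).

(* A path: nonempty sequence of pairwise distinct vertices, consecutive ones adjacent.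
   Its length (number of edges) is size s - 1. *)
Definition is_path (s : seq T) : bool :=
  if s is x :: s' then path e x s' && uniq s else false.

Definition is_longest_path (s : seq T) : Prop :=
  is_path s /\ forall t : seq T, is_path t -> size t <= size s.

Definition meets_all_longest (S : {set T}) : Prop :=
  forall s : seq T, is_longest_path s -> exists2 x, x \in S & x \in s.

Definition meets_all_longestb (S : {set T}) : bool :=
  if excluded_middle_informative (meets_all_longest S) then true else false.

(* lpt(G): minimum size of a vertex set meeting every longest path.
   (setT always meets every longest path, so the default #|T| is harmless.) *)
Definition lpt : nat :=
  \big[minn/#|T|]_(S : {set T} | meets_all_longestb S) #|S|.

(* Edges are unordered pairs [set x; y] with e x y. *)
Definition edge_cut (X : {set T}) : {set {set T}} :=
  [set [set x; y] | x in X, y in ~: X & e x y].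

Definition is_edge_cut (C : {set {set T}}) : bool :=
  [exists X : {set T}, C == edge_cut X].

Definition is_bond (C : {set {set T}}) : bool :=
  [&& C != set0, is_edge_cut C &
      [forall D : {set {set T}}, (is_edge_cut D && (D != set0)) ==> ~~ (D \proper C)]].

Definition connected_graph : Prop := forall x y : T, connect e x y.

End Graphs.

From mathcomp Require Import all_boot order zify.
From Stdlib Require Import Classical ClassicalEpsilon.
Set Implicit Arguments. Unset Strict Implicit. Unset Printing Implicit Defensive.

(* Call Y a bond shore when Y and its complement are nonempty and induce
   connected subgraphs. The edge cut of a bond shore is a bond, and the boundary
   of Y (its vertices with a neighbour outside Y) has at most as many vertices
   as that cut has edges. The complement of an end vertex of a longest path is
   a bond shore meeting every longest path. If a bond shore Y meets every
   longest path but some longest path R avoids its boundary, then R lies inside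
   Y, and removing from Y the component of Y - R containing a boundary vertex
   leaves a smaller bond shore that still contains R; it still meets every
   longest path because any two longest paths of a connected graph intersect.
   So a smallest bond shore meeting every longest path has a boundary meeting
   every longest path, whence lpt(G) <= |boundary| <= |bond|. *)

Section LongestPathTransversal.
Variables (T : finType) (e : rel T).
Hypothesis e_sym : symmetric e.

(* [A] induces a connected subgraph, stated without paths: every vertex
   predicate that is constant along the edges inside [A] is constant on [A]. *)
Definition connected_set (A : {set T}) : Prop :=
  forall P : pred T, {in A &, forall x y, e x y -> P x = P y} ->
    {in A &, forall x y, P x = P y}.

Lemma connected_set1 x : connected_set [set x].
Proof. by move=> P _ y z /set1P -> /set1P ->. Qed.

Lemma connected_setU A B x y : connected_set A -> connected_set B ->
  x \in A -> y \in B -> e x y -> connected_set (A :|: B).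
Proof.
move=> cA cB xA yB exy P hP.
have hPsub (C : {set T}) : C \subset A :|: B -> {in C &, forall u v, e u v -> P u = P v}.
  by move=> /subsetP sC u v uC vC; apply: hP; apply: sC.
have Px u : u \in A :|: B -> P u = P x.
  case/setUP => [uA|uB]; first exact: cA (hPsub _ (subsetUl _ _)) u x uA xA.
  rewrite (cB _ (hPsub _ (subsetUr _ _)) u y uB yB).
  by symmetry; apply: hP; rewrite // inE ?xA ?yB ?orbT.
by move=> u v uAB vAB; rewrite !Px.
Qed.

Lemma sorted_connected_set s : sorted e s -> connected_set [set:: s].
Proof.
elim: s => [|x [|y s] IH]; first by rewrite set_nil => _ P _ u; rewrite inE.
  by rewrite set_seq1 => _; apply: connected_set1.
rewrite set_cons /= => /andP [exy pys].
apply: (connected_setU _ (IH pys) (set11 x) _ exy); first exact: connected_set1.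
by rewrite set_cons setU11.
Qed.

Definition induced (W : {set T}) : rel T := [rel x y | [&& x \in W, y \in W & e x y]].

Definition component (W : {set T}) (b : T) : {set T} := [set z | connect (induced W) b z].

Lemma induced_sym (W : {set T}) : symmetric (induced W).
Proof. by move=> x y; rewrite /induced /= e_sym andbCA. Qed.

Lemma component_id (W : {set T}) b : b \in component W b.
Proof. by rewrite inE connect0. Qed.

Lemma component_sub (W : {set T}) b : b \in W -> component W b \subset W.
Proof.
move=> bW; apply/subsetP => z; rewrite inE => /closed_connect <- //.
by move=> x y /and3P [-> -> _].
Qed.

Lemma component_closed (W : {set T}) b x y : b \in W -> x \in component W b -> y \in W ->
  e x y -> y \in component W b.
Proof.
move=> bW xK yW exy; have xW := subsetP (component_sub bW) x xK.
move: xK; rewrite !inE => /connect_trans; apply.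
by apply: connect1; rewrite /induced /= xW yW.
Qed.

Lemma notin_component_setD (Y : {set T}) (Q : seq T) b z :
  b \in Y -> b \notin Q -> z \in Q -> z \notin component (Y :\: [set:: Q]) b.
Proof.
move=> bY bQ zQ; have bW : b \in Y :\: [set:: Q] by rewrite !inE bQ bY.
by apply: contraL zQ => /(subsetP (component_sub bW)); rewrite !inE => /andP [].
Qed.

Lemma connected_component (W : {set T}) b : connected_set (component W b).
Proof.
move=> P hP x y xK yK.
suff Pb z : z \in component W b -> P z = P b by rewrite !Pb.
move=> zK; pose a := [pred u | (u \in component W b) && (P u == P b)].
have closed_a : closed (induced W) a.
  move=> u v huv; have /and3P [_ _ euv] := huv.
  have Kuv : connect (induced W) b u = connect (induced W) b v.
    by have := connect_closed (sym_connect_sym (induced_sym W)) b huv.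
  rewrite !inE -Kuv; case uK: (connect _ b u) => //=.
  by rewrite (hP u v) // inE -?Kuv.
move: zK; rewrite inE => /(closed_connect closed_a).
by rewrite !inE connect0 eqxx => /esym /andP [_ /eqP].
Qed.

Lemma connected_setD_component (Y : {set T}) (Q : seq T) b :
  connected_set Y -> sorted e Q -> {subset Q <= Y} -> b \in Y -> b \notin Q ->
  connected_set (Y :\: component (Y :\: [set:: Q]) b).
Proof.
move=> cY sQ QY bY bQ; set W := Y :\: [set:: Q]; set K := component W b.
have bW : b \in W by rewrite !inE bQ bY.
have QYK : {subset Q <= Y :\: K} by move=> q qQ; rewrite inE notin_component_setD // QY.
have exit_K x y : x \in K -> y \in Y :\: K -> e x y -> y \in Q.
  move=> xK /setDP [yY yK] exy; apply: contraNT yK => yQ.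
  by apply: component_closed xK _ exy; rewrite // !inE yQ yY.
(* Extend [P] over [K] by its constant value on [Q]: the only edges of [Y]
   leaving [K] end on [Q]. *)
move=> P hP.
pose c := P (head b Q).
have PQ : {in Q, forall q, P q = c}.
  move=> q qQ; have hQ : head b Q \in Q by case: (Q) qQ => // ? ? _; apply: mem_head.
  apply: (sorted_connected_set sQ); rewrite ?inE //.
  by move=> u v; rewrite !inE => uQ vQ; apply: hP; apply: QYK.
pose P' z := if z \in K then c else P z.
have P'const : {in Y &, forall x y, P' x = P' y}.
  apply: cY => x y xY yY exy; rewrite /P'.
  case xK: (x \in K); case yK: (y \in K) => //.
  - by rewrite PQ // (exit_K x) // inE yK.
  - by rewrite PQ //; apply: (exit_K y); rewrite // 1?e_sym // inE xK.
  - by apply: hP => //; rewrite inE ?xK ?yK.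
move=> x y /setDP [xY xK] /setDP [yY yK].
by have := P'const x y xY yY; rewrite /P' (negbTE xK) (negbTE yK).
Qed.

Lemma mem_edge_cut (X : {set T}) x y : e x y ->
  ([set x; y] \in edge_cut e X) = ((x \in X) != (y \in X)).
Proof.
move=> exy; apply/imset2P/idP => [[u v uX] | ].
  rewrite !inE => /andP [vX _] Exy.
  have /set2P ux : u \in [set x; y] by rewrite Exy set21.
  have /set2P vx : v \in [set x; y] by rewrite Exy set22.
  by case: ux vx uX vX => -> [] ->; case: (x \in X); case: (y \in X).
case xX: (x \in X); case yX: (y \in X) => // _.
  by exists x y; rewrite // !inE yX exy.
by exists y x; rewrite 1?setUC // !inE xX e_sym exy.
Qed.

Lemma eq_edge_cut (X Z : {set T}) :
  (forall x y, e x y -> ((x \in X) != (y \in X)) = ((x \in Z) != (y \in Z))) ->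
  edge_cut e X = edge_cut e Z.
Proof.
have cutE (W : {set T}) E : E \in edge_cut e W -> exists x y, e x y /\ E = [set x; y].
  by case/imset2P => x y _; rewrite !inE => /andP [_ exy] ->; exists x, y.
move=> hXZ; apply/setP => E; apply/idP/idP => /[dup] /cutE [x [y [exy ->]]];
  by rewrite !mem_edge_cut // hXZ.
Qed.

Lemma edge_cut_subset_shore (Y Z : {set T}) :
  connected_set Y -> connected_set (~: Y) -> edge_cut e Z \subset edge_cut e Y ->
  edge_cut e Z = set0 \/ edge_cut e Z = edge_cut e Y.
Proof.
move=> cY cCY /subsetP sub.
have Z_const (A : {set T}) : connected_set A ->
    {in A &, forall u v, (u \in Y) = (v \in Y)} ->
    {in A &, forall u v, (u \in Z) = (v \in Z)}.
  move=> cA AY; apply: cA => u v uA vA euv.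
  have := sub [set u; v]; rewrite !mem_edge_cut // (AY u v uA vA) eqxx.
  by case: (u \in Z) (v \in Z) => [] [] // /(_ isT).
have same_side x w : (x \in Y) = (w \in Y) -> (x \in Z) = (w \in Z).
  case xY: (x \in Y) => wY.
    by apply: (Z_const Y cY) => // u v uY vY; rewrite uY vY.
  apply: (Z_const (~: Y) cCY); rewrite ?inE ?xY -?wY // => u v.
  by rewrite !inE => /negbTE -> /negbTE ->.
have [->|[E EZ]] := set_0Vmem (edge_cut e Z); [by left | right].
case/imset2P: EZ => u v uZ; rewrite !inE => /andP [vZ euv] _.
have uvY : (u \in Y) != (v \in Y).
  by rewrite -mem_edge_cut // sub // mem_edge_cut // uZ (negbTE vZ).
have hZ x : (x \in Z) = ((x \in Y) == (u \in Y)).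
  case: (boolP ((x \in Y) == (u \in Y))) => [/eqP /same_side -> // | xuY].
  rewrite (same_side x v) ?(negbTE vZ) //.
  by move: xuY uvY; case: (x \in Y) (u \in Y) (v \in Y) => [] [] [].
apply: eq_edge_cut => x y _; rewrite !hZ.
by case: (x \in Y) (y \in Y) (u \in Y) => [] [] [].
Qed.

Definition boundary (Y : {set T}) : {set T} :=
  [set y in Y | [exists x, (x \notin Y) && e x y]].

Lemma card_boundary (Y : {set T}) : #|boundary Y| <= #|edge_cut e Y|.
Proof.
pose end_in_Y (E : {set T}) := [pick z in E :&: Y].
have : Some @: boundary Y \subset end_in_Y @: edge_cut e Y.
  apply/subsetP => _ /imsetP [b /setIdP [bY /existsP [x /andP [xY exb]]] ->].
  apply/imsetP; exists [set b; x]; first by rewrite mem_edge_cut 1?e_sym // bY xY.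
  rewrite /end_in_Y; case: pickP => [z /setIP [/set2P [] -> // zY] | /(_ b)].
    by rewrite zY in xY.
  by rewrite !inE eqxx bY.
move/subset_leq_card; rewrite card_imset; last exact: Some_inj.
by move/leq_trans; apply; apply: leq_imset_card.
Qed.

Definition bond_shore (Y : {set T}) : Prop :=
  [/\ Y != set0, ~: Y != set0, connected_set Y & connected_set (~: Y)].

Lemma bond_shoreD_component (Y : {set T}) (Q : seq T) b :
  connected_set Y -> connected_set (~: Y :|: component (Y :\: [set:: Q]) b) ->
  Q != [::] -> sorted e Q -> {subset Q <= Y} -> b \in Y -> b \notin Q ->
  bond_shore (Y :\: component (Y :\: [set:: Q]) b).
Proof.
move=> cY cCYK Q0 sQ QY bY bQ; split.
- have [q qQ] : exists q, q \in Q by case: (Q) Q0 => // q ? _; exists q; apply: mem_head.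
  by apply/set0Pn; exists q; rewrite inE notin_component_setD // QY.
- by apply/set0Pn; exists b; rewrite in_setC in_setD component_id.
- exact: connected_setD_component.
- by rewrite setCD.
Qed.

Lemma lpt_le_card (S : {set T}) : meets_all_longest e S -> lpt e <= #|S|.
Proof.
move=> mS; have mSb : meets_all_longestb e S.
  by rewrite /meets_all_longestb; case: excluded_middle_informative.
by have := Order.TotalTheory.bigmin_le_cond #|T| (fun S : {set T} => #|S|) mSb.
Qed.

Lemma is_pathE s : is_path e s = (s != [::]) && sorted e s && uniq s.
Proof. by case: s. Qed.

Lemma sorted_rev s : sorted e (rev s) = sorted e s.
Proof. by rewrite rev_sorted; apply: eq_sorted => x y; rewrite e_sym. Qed.

Lemma half_subpath (P : seq T) a : sorted e P -> uniq P -> a \in P ->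
  exists s, [/\ sorted e (rcons s a), uniq (rcons s a), {subset rcons s a <= P}
               & size P < 2 * size (rcons s a)].
Proof.
move=> sP uP aP; case/splitPr: P / aP sP uP => P1 P2.
rewrite sorted_cat_cons cat_uniq => /andP [s1 s2] /and3P [u1 h12 u2].
have aP1 : a \notin P1.
  by apply: contraNN h12 => aP1; apply/hasP; exists a; rewrite ?mem_head.
have [le21 | lt12] := leqP (size P2) (size P1).
  exists P1; split; rewrite ?rcons_uniq ?aP1 //.
    by move=> z zP1; rewrite -cat_rcons mem_cat zP1.
  by rewrite size_rcons size_cat /= mul2n -addnn addSn ltnS leq_add2l ltnS.
exists (rev P2); rewrite -rev_cons; split.
- by rewrite sorted_rev.
- by rewrite rev_uniq.
- by move=> z; rewrite mem_rev mem_cat => ->; rewrite orbT.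
- by rewrite size_rev size_cat /= mul2n -addnn ltn_add2r ltnS ltnW.
Qed.

Lemma exists_longest_path (x0 : T) : exists s, is_longest_path e s.
Proof.
pose has_path n := [exists t : n.-tuple T, is_path e t].
have path1 : exists n, has_path n by exists 1; apply/existsP; exists [tuple x0].
have path_bound n : has_path n -> n <= #|T|.
  case/existsP => t; rewrite is_pathE => /andP [_ /card_uniqP card_t].
  by rewrite -(size_tuple t) -card_t max_card.
case: (ex_maxnP path1 path_bound) => n /existsP [t pt] maxn.
exists t; split => // s ps; rewrite size_tuple; apply: maxn.
by apply/existsP; exists (in_tuple s).
Qed.

Lemma bridge_walk (A B : seq T) a m w : {in A, forall z, z \notin B} -> a \in A ->
  {in m, forall z, z \notin A ++ B} -> path e a (m ++ w) -> last a (m ++ w) \in B ->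
  exists a' m' q, [/\ a' \in A, q \in B, path e a' (rcons m' q)
                    & {in m', forall z, z \notin A ++ B}].
Proof.
move=> AB; elim: w a m => [|y w IH] a m aA mAB; rewrite ?cats0 => pam lB.
  have := mem_last a m; rewrite inE => /orP [/eqP la | lm].
    by have := AB a aA; rewrite -la lB.
  by have := mAB _ lm; rewrite mem_cat lB orbT.
move: (pam); rewrite cat_path /= => /and3P [pm exy pyw].
case yB: (y \in B); first by exists a, m, y; rewrite rcons_path pm exy.
case yA: (y \in A); first by apply: (IH y [::]) => //; move: lB; rewrite last_cat.
apply: (IH a (rcons m y)); rewrite ?cat_rcons //.
by move=> z; rewrite mem_rcons inE => /orP [/eqP -> | /mAB //]; rewrite mem_cat yA yB.
Qed.

Hypothesis G_conn : connected_graph e.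

Lemma connected_setT : connected_set setT.
Proof.
move=> P hP x y _ _; apply: closed_connect (G_conn x y) => u v euv.
exact: hP (in_setT u) (in_setT v) euv.
Qed.

Lemma cross_edge (X : {set T}) : X != set0 -> ~: X != set0 ->
  exists x y, [/\ x \in X, y \notin X & e x y].
Proof.
move=> /set0Pn [x xX] /set0Pn [y]; rewrite inE => yX; apply: NNPP => no_cross.
suff invX : {in setT &, forall u v, e u v -> (u \in X) = (v \in X)}.
  by have := connected_setT invX (in_setT x) (in_setT y); rewrite xX (negbTE yX).
move=> u v _ _ euv; apply/idP/idP => [uX | vX]; apply/negPn/negP => nX; apply: no_cross.
  by exists u, v.
by exists v, u; rewrite e_sym.
Qed.

Lemma bond_shore_is_bond (Y : {set T}) : bond_shore Y -> is_bond e (edge_cut e Y).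
Proof.
case=> Y0 CY0 cY cCY; have [x [y [xY yY exy]]] := cross_edge Y0 CY0.
apply/and3P; split.
- by apply/set0Pn; exists [set x; y]; rewrite mem_edge_cut // xY (negbTE yY).
- by apply/existsP; exists Y.
apply/forallP => D; apply/implyP => /andP [/existsP [Z /eqP ->] Z0].
rewrite properEneq negb_and negbK.
have [sub|] := boolP (edge_cut e Z \subset _); last by rewrite orbT.
by have [Z_0 | ->] := edge_cut_subset_shore cY cCY sub; rewrite ?Z_0 ?eqxx in Z0 *.
Qed.

Lemma longest_path_size s : 1 < #|T| -> is_longest_path e s -> 1 < size s.
Proof.
move=> T2 [_ smax]; have [x _] := card_gt0P (ltnW T2).
have [||x' [y [/set1P -> yx exy]]] := cross_edge (X := [set x]).
- by apply/set0Pn; exists x; rewrite set11.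
- by rewrite -card_gt0 cardsC1; lia.
apply: leq_trans (smax [:: x; y] _) => //.
by rewrite /= exy !inE andbT; rewrite in_set1 in yx; rewrite eq_sym yx.
Qed.

Lemma bridge (A B : seq T) a0 b0 : a0 \in A -> b0 \in B -> {in A, forall z, z \notin B} ->
  exists a m q, [/\ a \in A, q \in B, path e a (rcons m q), uniq m
                  & {in m, forall z, z \notin A ++ B}].
Proof.
move=> a0A b0B AB; have /connectP [w pw lw] := G_conn a0 b0.
have lB : last a0 w \in B by rewrite -lw.
have m0 : {in [::], forall z, z \notin A ++ B} by [].
have [a [m [q [aA qB pamq mAB]]]] := bridge_walk AB a0A m0 pw lB.
have := last_rcons a m q; case: (shortenP pamq) => p pp up sub_p.
case/lastP: p pp up sub_p => [_ _ _ /= aq | m' q' pm'].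
  by have := AB a aA; rewrite aq qB.
rewrite last_rcons => /= /andP [_ uq] sub_m' q'q; rewrite {}q'q in pm' uq sub_m'.
move: uq; rewrite rcons_uniq => /andP [qm' um']; exists a, m', q; split => // z zm'.
have /sub_m' : z \in rcons m' q by rewrite mem_rcons inE zm' orbT.
rewrite mem_rcons inE => /orP [/eqP zq | /mAB //].
by move: zm'; rewrite zq (negbTE qm').
Qed.

(* Were [P] and [R] disjoint, their longer halves joined by a bridge would form
   a path longer than both. *)
Lemma longest_paths_meet P R : is_longest_path e P -> is_longest_path e R ->
  exists2 z, z \in P & z \in R.
Proof.
move=> [pP maxP] [pR maxR].
case: (boolP (has (mem R) P)) => [/hasP [z zP zR] | /hasPn PR]; first by exists z.
exfalso; move: (pP) (pR); rewrite !is_pathE.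
move=> /andP [/andP [P0 sP] uP] /andP [/andP [R0 sR] uR].
have [a0 a0P] : exists a0, a0 \in P by case: (P) P0 => // x ? _; exists x; apply: mem_head.
have [b0 b0R] : exists b0, b0 \in R by case: (R) R0 => // x ? _; exists x; apply: mem_head.
have [a [m [q [aP qR pamq um mPR]]]] := bridge a0P b0R PR.
have [s1 [ss1 us1 s1P size1]] := half_subpath sP uP aP.
have [s2 [ss2 us2 s2R size2]] := half_subpath sR uR qR.
have mP z : z \in m -> z \notin P by move/mPR; rewrite mem_cat negb_or => /andP [].
have mR z : z \in m -> z \notin R by move/mPR; rewrite mem_cat negb_or => /andP [].
pose t := rcons s1 a ++ m ++ rev (rcons s2 q).
have st : sorted e t.
  rewrite /t rev_rcons cat_rcons sorted_cat_cons ss1 -cat_rcons cat_path pamq last_rcons /=.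
  by rewrite -/(sorted e (q :: rev s2)) -rev_rcons sorted_rev.
have ut : uniq t.
  rewrite /t !cat_uniq us1 um rev_uniq us2 has_cat negb_or /= andbT.
  rewrite -andbA; apply/and3P; split; apply/hasPn => z.
  - by move/mP; apply: contra => /s1P.
  - by rewrite mem_rev => /s2R zR; apply: contraTN zR => /s1P; apply: PR.
  - by rewrite mem_rev => /s2R zR; apply: contraTN zR; apply: mR.
have tP : size t <= size P.
  by apply: maxP; rewrite is_pathE st ut andbT -size_eq0 /t size_cat size_rcons.
have arith p r x k y :
    x + (k + y) <= p -> r <= p -> p <= r -> p < 2 * x -> r < 2 * y -> False.
  by clear -p r x k y; lia.
move: tP; rewrite /t !size_cat size_rev.
by move/arith/(_ (maxP R pR) (maxR P pP) size1 size2).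
Qed.

(* A neighbour of [b] off the path would extend it. *)
Lemma component_head_longest b Q : is_longest_path e (b :: Q) ->
  component (setT :\: [set:: Q]) b \subset [set b].
Proof.
move=> [pbQ maxbQ].
have closed_b : closed (induced (setT :\: [set:: Q])) [set b].
  apply: (intro_closed (sym_connect_sym (induced_sym _))).
  move=> x y /and3P [_ yW exy] /set1P xb.
  rewrite {x}xb in exy; apply/set1P; case: (eqVneq y b) => // yb; exfalso.
  suff /maxbQ : is_path e (y :: b :: Q) by rewrite /= ltnn.
  by move: pbQ yW; rewrite /= !inE e_sym exy negb_or yb => /and3P [-> -> ->] /andP [-> _].
apply/subsetP => z; rewrite [z \in component _ _]inE => zK.
by rewrite -(closed_connect closed_b zK) set11.
Qed.

Lemma shrink_shore (Y : {set T}) : bond_shore Y -> meets_all_longest e Y ->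
  ~ meets_all_longest e (boundary Y) ->
  exists Y', [/\ bond_shore Y', meets_all_longest e Y' & #|Y'| < #|Y|].
Proof.
move=> [Y0 CY0 cY cCY] mY nmB.
have [R lR RB] : exists2 R, is_longest_path e R & {in R, forall z, z \notin boundary Y}.
  apply: NNPP => none; apply: nmB => s ls; apply: NNPP => miss; apply: none.
  by exists s => // z zs; apply/negP => zB; apply: miss; exists z.
have [pR _] := lR; move: (pR); rewrite is_pathE => /andP [/andP [R0 sR] _].
have RY : {subset R <= Y}.
  have [y yY yR] := mY R lR.
  have stay u v : u \in R -> e u v -> u \in Y -> v \in Y.
    move=> uR euv uY; apply: contraTT (RB u uR) => vY.
    by rewrite negbK inE uY; apply/existsP; exists v; rewrite vY e_sym.
  suff sameY : {in [set:: R] &, forall u v, (u \in Y) = (v \in Y)}.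
    by move=> z zR; rewrite (sameY z y) ?inE.
  apply: (sorted_connected_set sR) => u v; rewrite !inE => uR vR euv.
  by apply/idP/idP; [apply: stay uR euv | apply: stay vR _; rewrite e_sym].
have [x [b [xCY bCY exb]]] : exists x b, [/\ x \in ~: Y, b \notin ~: Y & e x b].
  by apply: cross_edge; rewrite ?setCK.
have bY : b \in Y by rewrite inE negbK in bCY.
have bR : b \notin R.
  apply: contraL (RB b) _; rewrite inE bY.
  by apply/existsP; exists x; rewrite exb -in_setC xCY.
set K := component (Y :\: [set:: R]) b.
exists (Y :\: K); split.
- apply: bond_shoreD_component => //.
  by apply: (connected_setU cCY _ xCY (component_id _ b) exb); apply: connected_component.
- move=> S lS; have [z zS zR] := longest_paths_meet lS lR; exists z => //.
  by rewrite inE notin_component_setD // RY.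
- apply: proper_card; apply/properP; split; first exact: subsetDl.
  by exists b; rewrite // inE component_id.
Qed.

Lemma exists_initial_shore : 1 < #|T| -> exists Y, bond_shore Y /\ meets_all_longest e Y.
Proof.
move=> T2; have [x0 _] := card_gt0P (ltnW T2).
have [[|b Q] lP] := exists_longest_path x0; first by case: lP.
have Q0 : Q != [::] by have := longest_path_size T2 lP; case: (Q).
have [/= /andP [pbQ /andP [bQ _]] _] := lP.
set K := component (setT :\: [set:: Q]) b.
exists (setT :\: K); split.
  apply: bond_shoreD_component => //.
  - exact: connected_setT.
  - by rewrite setCT set0U; apply: connected_component.
  - exact: path_sorted pbQ.
  - by move=> q _; apply: in_setT.
move=> S lS; have := longest_path_size T2 lS; have [pS _] := lS.
case: S lS pS => [|s1 [|s2 S']] //= lS /andP [_ /andP [s1S _]] _.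
have [z zS zb] : exists2 z, z \in [:: s1, s2 & S'] & z != b.
  case: (eqVneq s1 b) => [s1b | s1b]; last by exists s1; rewrite ?mem_head.
  exists s2; rewrite ?inE ?eqxx ?orbT // -s1b eq_sym.
  by apply: contraNneq s1S => ->; apply: mem_head.
exists z => //; rewrite in_setD in_setT andbT; apply: contra zb => zK.
by have /set1P -> := subsetP (component_head_longest lP) z zK.
Qed.

Lemma exists_shore_meeting_boundary :
  (exists Y, bond_shore Y /\ meets_all_longest e Y) ->
  exists Y, bond_shore Y /\ meets_all_longest e (boundary Y).
Proof.
case=> Y; have [n] := ubnP #|Y|; elim: n Y => // n IH Y; rewrite ltnS => leYn [sY mY].
have [mB | nmB] := classic (meets_all_longest e (boundary Y)); first by exists Y.
have [Y' [sY' mY' ltY']] := shrink_shore sY mY nmB.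
exact: IH Y' (leq_trans ltY' leYn) (conj sY' mY').
Qed.

End LongestPathTransversal.

Theorem corollary3 (T : finType) (e : rel T)
  (e_sym : symmetric e) (e_irr : irreflexive e)
  (T_nontriv : 1 < #|T|)
  (G_conn : connected_graph e) :
  lpt e <= \max_(C : {set {set T}} | is_bond e C) #|C|.
Proof.
have [Y [sY mB]] := exists_shore_meeting_boundary e_sym G_conn
  (exists_initial_shore e_sym G_conn T_nontriv).
apply: leq_trans (lpt_le_card mB) _.
apply: leq_trans (card_boundary e_sym Y) _.
exact: leq_bigmax_cond (bond_shore_is_bond e_sym G_conn sY).
Qed.
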